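(* For every positive integer $n$ and every permutation $\pi:Q_n\to Q_n$ of $Q_n=\{q_1,\dots,q_n\}$ there is a word $\alpha_\pi\in\Sigma_n^*$ such that for all $q,q'\in Q_n$: there exists $w\in\{1\}^*$ with $\langle q,\langle\alpha_\pi,w\rangle,q'\rangle\in\Delta_n^*$ if and only if $q'=\pi(q)$.
   Context: Let $\Sigma_n=\{a_1,\dots,a_n\}$, output monoid the free monoid $\{1\}^*$. $\mathcal{T}_n=\langle\Sigma_n^*\times\{1\}^*,Q,\{s\},\{f\},\Delta_n\rangle$ with $Q=\{s,q_1,\dots,q_n,f\}$ and $\Delta_n=\Delta_{s,n}\cup\Delta_{Q_n}\cup\Delta_{f,n}$ where: $\Delta_{s,n}=\{\langle s,\langle a_j,1^{i-1}\rangle,q_i\rangle:1\le i,j\le n\}$; $\Delta_{Q_n}$ consists, for all $1\le i,j\le n$, of $\langle q_i,\langle a_j,1^n\rangle,q_i\rangle$ if $i\notin\{1,j\}$, $\langle q_1,\langle a_j,1^{n+j-1}\rangle,q_j\rangle$ if $i=1$, and $\langle q_j,\langle a_j,1^{n-j+1}\rangle,q_1\rangle$ if $i=j\neq1$; $\Delta_{f,n}=\{\langle q_i,\langle a_j,1^{2n-i+1}\rangle,f\rangle:1\le j\le i\le n\}$. $\Delta_n^*$ is the generalized transition relation: labels (input word, concatenated output) of paths, including empty paths $\langle q,\langle\varepsilon,\varepsilon\rangle,q\rangle$. *)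

(* Letters a_j are encoded by the natural number j (1 <= j <= n);
   an output word 1^k in the free monoid {1}^* is encoded by its length k;
   concatenation of outputs is addition. *)
From mathcomp Require Import all_boot all_order.
From mathcomp Require Import perm.
Set Implicit Arguments. Unset Strict Implicit. Unset Printing Implicit Defensive.

(* States Q = {s, q_1, ..., q_n, f}; q_i is encoded as qst i (1-based). *)
Inductive state := sst | qst of nat | fst.

(* Delta_n = Delta_{s,n} u Delta_{Q_n} u Delta_{f,n} :
   delta n p j k p'  means  <p, <a_j, 1^k>, p'> \in Delta_n. *)
Inductive delta (n : nat) : state -> nat -> nat -> state -> Prop :=
  | dS i j : 1 <= i <= n -> 1 <= j <= n ->
      delta n sst j (i - 1) (qst i)
  | dQstay i j : 1 <= i <= n -> 1 <= j <= n -> i != 1 -> i != j ->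
      delta n (qst i) j n (qst i)
  | dQ1 j : 1 <= j <= n ->
      delta n (qst 1) j (n + j - 1) (qst j)
  | dQback j : 1 <= j <= n -> j != 1 ->
      delta n (qst j) j (n - j + 1) (qst 1)
  | dF i j : 1 <= j -> j <= i -> i <= n ->
      delta n (qst i) j (2 * n - i + 1) fst.

Inductive delta_star (n : nat) : state -> seq nat -> nat -> state -> Prop :=
  | ds_nil p : delta_star n p [::] 0 p
  | ds_cons p a k p' w m p'' :
      delta n p a k p' -> delta_star n p' w m p'' ->
      delta_star n p (a :: w) (k + m) p''.

(* q_{k+1} for k : 'I_n, identifying Q_n with 'I_n. *)
Definition qof (n : nat) (k : 'I_n) : state := qst k.+1.

Definition is_word (n : nat) (w : seq nat) : bool := all (fun a => 1 <= a <= n) w.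

From mathcomp Require Import all_boot all_order.
From mathcomp Require Import perm fingroup zify.
Set Implicit Arguments. Unset Strict Implicit. Unset Printing Implicit Defensive.

(* On Q_n the letter a_j acts as the transposition (q_1 q_j) (the identity for
   j = 1), and the only other transitions out of Q_n lead to the sink f.  So a
   word alpha can go from q to q' exactly when q' is the image of q under the
   product of the transpositions read along alpha.  Since the transpositions
   (q_1 q_j) generate the symmetric group, every permutation arises this way. *)

Lemma tperm_star (T : finType) (x a b : T) :
  exists cs : seq T, tperm a b = (\prod_(c <- cs) tperm x c)%g.
Proof.
have [->|bx] := eqVneq b x.
  by exists [:: a]; rewrite big_seq1 tpermC.
have [->|ab] := eqVneq a b.
  by exists [::]; rewrite big_nil tperm1.
exists [:: a; b; a]; rewrite !big_cons big_nil mulg1.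
have := tpermJ x b (tperm x a).
by rewrite conjgE tpermV tpermL tpermD // eq_sym // => <-.
Qed.

Lemma prod_tperm_star (T : finType) (x : T) (s : {perm T}) :
  exists cs : seq T, s = (\prod_(c <- cs) tperm x c)%g.
Proof.
have [ts -> _] := prod_tpermP s; elim: ts => [|t ts [cs IHcs]].
  by exists [::]; rewrite !big_nil.
have [cs1 Ecs1] := tperm_star x t.1 t.2.
by exists (cs1 ++ cs); rewrite big_cat big_cons Ecs1 IHcs.
Qed.

Lemma delta_star_fst n w m p : delta_star n fst w m p -> p = fst.
Proof.
move Ef: fst => f H; case: H Ef => // ? ? ? ? ? ? ? + _ Ef.
by rewrite -Ef => H; inversion H.
Qed.

Section LetterAction.

Variable n' : nat.
Local Notation n := n'.+1.

Definition letter_perm (j : nat) : {perm 'I_n} := tperm ord0 (inord j.-1).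

Definition word_perm (w : seq nat) : {perm 'I_n} := (\prod_(j <- w) letter_perm j)%g.

Lemma word_perm_nil : word_perm [::] = 1%g.
Proof. by rewrite /word_perm big_nil. Qed.

Lemma word_perm_cons j w k : word_perm (j :: w) k = word_perm w (letter_perm j k).
Proof. by rewrite /word_perm big_cons permM. Qed.

Lemma delta_qof_inv (k : 'I_n) j m p :
  delta n (qof k) j m p -> p = fst \/ p = qof (letter_perm j k).
Proof.
rewrite /qof /letter_perm; move Ek: (qst k.+1) => s H.
case: H Ek => [//|i {}j Hi Hj i1 ij|{}j Hj|{}j Hj j1|]; last by left.
- case=> Ei; right; rewrite -Ei tpermD //;
    by apply/eqP => /(congr1 val) /=; rewrite ?inordK; lia.
- case=> Ek; right; have -> : k = ord0 by apply: val_inj => /=; lia.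
  by rewrite tpermL inordK; [congr qst; lia | lia].
- case=> Ek; right; have -> : k = inord j.-1 by apply: val_inj => /=; rewrite inordK; lia.
  by rewrite tpermR.
Qed.

Lemma delta_qof_letter (k : 'I_n) j : 1 <= j <= n ->
  exists m, delta n (qof k) j m (qof (letter_perm j k)).
Proof.
move=> Hj; have Ej : (inord j.-1 : 'I_n).+1 = j by rewrite inordK; lia.
rewrite /qof /letter_perm.
have [->|k0] := eqVneq k ord0.
  by rewrite tpermL Ej; exists (n + j - 1); apply: dQ1.
have [kj|kj] := eqVneq k (inord j.-1).
  rewrite kj tpermR Ej; exists (n - j + 1); apply: dQback => //.
  by apply: contra_neq k0 => j1; apply: val_inj; rewrite /= kj; lia.
rewrite tpermD 1?eq_sym //; exists n; apply: dQstay; rewrite ?ltn_ord //.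
by apply: contra_neq kj => kj; apply: val_inj => /=; lia.
Qed.

Lemma delta_star_word_perm (k : 'I_n) w : is_word n w ->
  exists m, delta_star n (qof k) w m (qof (word_perm w k)).
Proof.
elim: w k => [|j w IHw] k.
  by exists 0; rewrite word_perm_nil perm1; apply: ds_nil.
case/andP=> Hj Hw; have [m1 Hstep] := delta_qof_letter k Hj.
have [m2 Hrun] := IHw (letter_perm j k) Hw.
by exists (m1 + m2); rewrite word_perm_cons; apply: ds_cons Hstep Hrun.
Qed.

Lemma delta_star_qof_target (k : 'I_n) w m r :
  delta_star n (qof k) w m r -> r = fst \/ r = qof (word_perm w k).
Proof.
move Ep: (qof k) => p H; elim: H k Ep => [{}p|{}p j m1 p1 {}w m2 {}r Hstep Hrun IHrun] k Ep.
  by right; rewrite -Ep word_perm_nil perm1.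
rewrite -Ep in Hstep; rewrite word_perm_cons.
case: (delta_qof_inv Hstep) => Ep1; last exact: IHrun.
by left; move: Hrun; rewrite Ep1 => /delta_star_fst.
Qed.

Lemma delta_star_qofP (k k' : 'I_n) w : is_word n w ->
  (exists m, delta_star n (qof k) w m (qof k')) <-> k' = word_perm w k.
Proof.
move=> Hw; split=> [[m /delta_star_qof_target [//|[/val_inj]]] // | ->].
exact: delta_star_word_perm.
Qed.

Lemma word_perm_succ (cs : seq 'I_n) :
  word_perm [seq c.+1 | c : 'I_n <- cs] = (\prod_(c <- cs) tperm ord0 c)%g.
Proof. by rewrite /word_perm big_map; apply: eq_bigr => c _; rewrite /letter_perm inord_val. Qed.

Lemma is_word_succ (cs : seq 'I_n) : is_word n [seq c.+1 | c : 'I_n <- cs].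
Proof. by rewrite /is_word all_map; apply/allP => c _ /=; rewrite ltn_ord. Qed.

End LetterAction.

Theorem lemma10 (n : nat) (hn : 0 < n) (pi : {perm 'I_n}) :
  exists alpha : seq nat, is_word n alpha /\
    forall q q' : 'I_n,
      (exists w : nat, delta_star n (qof q) alpha w (qof q')) <-> q' = pi q.
Proof.
case: n hn pi => // n _ pi.
have [cs ->] := prod_tperm_star ord0 pi.
exists [seq c.+1 | c : 'I_n.+1 <- cs]; split; first exact: is_word_succ.
by move=> q q'; rewrite delta_star_qofP ?is_word_succ // word_perm_succ.
Qed.
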